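(* Let $n,k,d\in\mathbb N$ satisfy $n\ge 60k$ and $k\ge 4d$. Let $T$ be a tree with $n$ vertices and at most $n/(5d)$ leaves. Then $T$ contains either a $2d$-separated set of at least $n/(40k)$ leaves, or a collection of at least $n/(40k)$ vertex-disjoint bare paths each of length $k$.
   Context: A path with $\ell$ vertices has length $\ell-1$. A bare path in a tree $T$ is a path in $T$ all of whose interior vertices have degree exactly $2$ in $T$. A vertex set $Q$ is $k$-separated in $T$ if every two distinct vertices of $Q$ are at distance at least $k$ in $T$. *)

From mathcomp Require Import all_boot.
Set Implicit Arguments. Unset Strict Implicit. Unset Printing Implicit Defensive.

Definition simple_graph (V : finType) (e : rel V) : Prop :=
  symmetric e /\ irreflexive e.

Definition deg (V : finType) (e : rel V) (x : V) : nat := #|[set y | e x y]|.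

(* a (graph) path: nonempty sequence of distinct vertices, consecutive ones
   adjacent; its length is (number of vertices) - 1 *)
Definition is_gpath (V : finType) (e : rel V) (s : seq V) : bool :=
  if s is x :: p then path e x p && uniq s else false.

Definition is_gcycle (V : finType) (e : rel V) (s : seq V) : bool :=
  (2 < size s) && cycle e s && uniq s.

Definition connected_graph (V : finType) (e : rel V) : Prop :=
  forall x y : V, exists p : seq V, path e x p /\ last x p = y.

Definition is_tree (V : finType) (e : rel V) : Prop :=
  simple_graph e /\ connected_graph e /\ forall s : seq V, ~~ is_gcycle e s.

Definition is_leaf (V : finType) (e : rel V) (x : V) : bool := deg e x == 1.

Definition leaves (V : finType) (e : rel V) : {set V} := [set x | is_leaf e x].

Definition dist_ge (V : finType) (e : rel V) (x y : V) (m : nat) : Prop :=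
  forall p : seq V, path e x p -> last x p = y -> m <= size p.

Definition separated (V : finType) (e : rel V) (k : nat) (Q : {set V}) : Prop :=
  forall x y, x \in Q -> y \in Q -> x != y -> dist_ge e x y k.

Definition is_bare_path (V : finType) (e : rel V) (s : seq V) : Prop :=
  is_gpath e s /\
  forall i, 0 < i -> i < (size s).-1 ->
    forall x0, deg e (nth x0 s i) = 2.

Definition disjoint_bare_paths (V : finType) (e : rel V) (k : nat)
    (P : seq (seq V)) : Prop :=
  (forall s, s \in P -> is_bare_path e s /\ size s = k.+1) /\
  (forall i j, i < size P -> j < size P -> i != j ->
     [disjoint (nth [::] P i) & (nth [::] P j)]).

From mathcomp Require Import all_boot zify.
Set Implicit Arguments. Unset Strict Implicit. Unset Printing Implicit Defensive.

(* Root the tree at a leaf r.  Each degree-2 vertex lies on the run of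
   consecutive degree-2 vertices just above a unique branch vertex c <> r of
   degree <> 2; cutting the runs into blocks of k+1 vertices yields disjoint
   bare paths of length k.  Call c long when its run has at least 2d-1
   vertices; the tops are r and the long vertices.  Choosing one leaf for
   each top that is the nearest top above some leaf gives leaves pairwise at
   distance >= 2d: a walk out of the subtree of a long vertex has to climb
   its whole run, since a degree-2 vertex has a single child.  A top that is
   nobody's nearest top has degree >= 3, and below each of its children lies
   a long vertex having it as nearest top; hence #long < 2q, where q is the
   number of chosen leaves.  Counting vertices along the runs and using
   #(deg <> 2) < 2L for the L leaves gives n <= 2(2d-1)L + 2kq + 2(k+1)p
   with p bare paths, impossible if L <= n/(5d), q < n/(40k), p < n/(40k). *)

Lemma sum_bool_card (T : finType) (P : pred T) : \sum_x (P x : nat) = #|[set x | P x]|.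
Proof.
by rewrite -sum1_card [RHS]big_mkcond; apply: eq_bigr => x _; rewrite inE; case: (P x).
Qed.

Section Walks.
Variables (V : eqType) (e : rel V).

Lemma walk_lipschitz (f : V -> nat) :
  (forall x y, e x y -> f y <= (f x).+1) ->
  forall x s, path e x s -> f (last x s) <= f x + size s.
Proof.
move=> f_lip x s; elim: s x => [|y s IHs] x /=; first by rewrite addn0.
by case/andP=> /f_lip fxy /IHs; lia.
Qed.

Hypothesis e_sym : symmetric e.

Lemma rev_walk x s : path e x s ->
  path e (last x s) (rev (belast x s)) /\ last (last x s) (rev (belast x s)) = x.
Proof.
move=> exs; split; first by rewrite rev_path (eq_path (e' := e)).
by case/lastP: s {exs} => [|s y] //; rewrite belast_rcons rev_cons last_rcons.
Qed.

End Walks.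

Lemma dist_ge_sym (V : finType) (e : rel V) x y m :
  symmetric e -> dist_ge e x y m -> dist_ge e y x m.
Proof.
move=> e_sym dxy s eys lys; have [exs lxs] := rev_walk e_sym eys.
by rewrite lys in exs lxs; rewrite -(size_belast y) -size_rev; apply: dxy.
Qed.

Lemma nth_map_disjoint (T : eqType) (V : finType) (f : T -> seq V) (s : seq T) :
  uniq s -> {in s &, forall x y, x != y -> [disjoint f x & f y]} ->
  forall i j, i < size s -> j < size s -> i != j ->
    [disjoint nth [::] (map f s) i & nth [::] (map f s) j].
Proof.
move=> s_uniq f_disj i j ltis ltjs ij; case: s => [//|x0 s'] in s_uniq f_disj ltis ltjs *.
rewrite !(nth_map x0) //; apply: f_disj; rewrite ?mem_nth //.
by rewrite nth_uniq.
Qed.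

Section RootedTree.
Variables (V : finType) (e : rel V).
Hypotheses (e_sym : symmetric e) (e_irr : irreflexive e).
Hypotheses (e_conn : connected_graph e) (e_acyc : forall s : seq V, ~~ is_gcycle e s).

Lemma no_detour v x y p : e v x -> e v y -> x != y -> path e x p ->
  last x p = y -> v \notin x :: p -> False.
Proof.
move=> evx evy xy exp; case: (shortenP exp) => p' ep' up' sub' lp' vp.
have vp' : v \notin x :: p'.
  by apply: contra vp; rewrite !inE => /orP[-> //|/sub' ->]; rewrite orbT.
have := e_acyc (v :: x :: p').
rewrite /is_gcycle /= evx rcons_path ep' lp' e_sym evy vp' /=.
move: up'; rewrite /= => /andP[-> ->]; rewrite andbT.
by case: p' {ep' vp' sub'} lp' => [/= yx|//]; rewrite yx eqxx in xy.
Qed.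

Variable r : V.

Definition reaches_in (v : V) (n : nat) : bool :=
  [exists t : n.-tuple V, path e r t && (last r t == v)].

Lemma reaches_in_ex v : exists n, reaches_in v n.
Proof.
case: (e_conn r v) => p [ep lp]; exists (size p).
by apply/existsP; exists (in_tuple p); rewrite /= ep lp eqxx.
Qed.

Definition depth v := ex_minn (reaches_in_ex v).

Lemma depth_walk v : exists t, [/\ path e r t, last r t = v & size t = depth v].
Proof.
rewrite /depth; case: ex_minnP => m /existsP[t /andP[et /eqP lt]] _.
by exists t; rewrite size_tuple.
Qed.

Lemma depth_min v t : path e r t -> last r t = v -> depth v <= size t.
Proof.
move=> et lt; rewrite /depth; case: ex_minnP => m _; apply.
by apply/existsP; exists (in_tuple t); rewrite /= et lt eqxx.
Qed.

Lemma depth_root : depth r = 0.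
Proof. by apply/eqP; rewrite -leqn0 (depth_min (t := [::])). Qed.

Lemma depth_eq0 v : depth v = 0 -> v = r.
Proof. by case: (depth_walk v) => [[|x t] [_ lt st]] // /esym; rewrite -st. Qed.

Lemma depth_edge x y : e x y -> depth y <= (depth x).+1.
Proof.
move=> exy; case: (depth_walk x) => t [et lt st].
rewrite -st -(size_rcons t y); apply: depth_min; last by rewrite last_rcons.
by rewrite rcons_path et lt exy.
Qed.

Lemma shortest_walk_avoid x v t : path e r t -> last r t = x -> size t = depth x ->
  depth x <= depth v -> v != x -> v \notin r :: t.
Proof.
move=> et lt st dxv vx; apply/negP => vt; move: et lt st.
case/splitPl: vt => t1 t2 lt1; rewrite cat_path last_cat size_cat lt1 => /andP[et1 _].
have := depth_min et1 lt1.
by case: t2 => [/= _ xv|y t2 dvt _ /=]; [rewrite xv eqxx in vx | lia].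
Qed.

(* In a tree every vertex has at most one neighbour that is not deeper:
   two of them would be joined by a walk through shortest walks from r,
   avoiding the vertex itself. *)
Lemma shallow_neighbor_unique v x y : e v x -> e v y ->
  depth x <= depth v -> depth y <= depth v -> x = y.
Proof.
move=> evx evy dxv dyv; apply/eqP/negPn/negP => xy.
case: (depth_walk x) => tx [ex lx sx]; case: (depth_walk y) => ty [ey ly sy].
have vx : v != x by apply: contraTneq evx => ->; rewrite e_irr.
have vy : v != y by apply: contraTneq evy => ->; rewrite e_irr.
have vtx := shortest_walk_avoid ex lx sx dxv vx.
have := shortest_walk_avoid ey ly sy dyv vy; rewrite inE negb_or => /andP[_ vty].
have [erx lrx] := rev_walk e_sym ex; rewrite lx in erx lrx.
apply: (@no_detour v x y (rev (belast r tx) ++ ty)) => //.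
- by rewrite cat_path erx lrx ey.
- by rewrite last_cat lrx ly.
rewrite inE negb_or vx mem_cat negb_or mem_rev vty andbT.
by apply: contra vtx => /mem_belast.
Qed.

Definition parent v := odflt v [pick u | e v u && ((depth u).+1 == depth v)].

Lemma parent_root : parent r = r.
Proof. by rewrite /parent; case: pickP => // u /andP[_]; rewrite depth_root. Qed.

Lemma parent_edge v : v != r -> e v (parent v) /\ (depth (parent v)).+1 = depth v.
Proof.
move=> vr; rewrite /parent; case: pickP => [u /andP[? /eqP ?] //|none].
case: (depth_walk v) => t [et lt st]; case/lastP: t => [|t u] in et lt st.
  by rewrite -lt eqxx in vr.
move: et lt st; rewrite rcons_path last_rcons size_rcons => /andP[et eu] uv st; subst u.
have dt := depth_min et (erefl _).
by have := none (last r t); rewrite e_sym eu eqn_leq depth_edge // -st ltnS dt.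
Qed.

Lemma depth_parent v : depth (parent v) = (depth v).-1.
Proof.
have [->|vr] := eqVneq v r; first by rewrite parent_root depth_root.
by have [_ <-] := parent_edge vr.
Qed.

Lemma edge_parent x y : e x y -> (y = parent x /\ x != r) \/ (x = parent y /\ y != r).
Proof.
move=> exy; have [dyx|dxy] := leqP (depth y) (depth x).
  have xr : x != r.
    apply/eqP => xr; move: dyx exy; rewrite xr depth_root leqn0 => /eqP/depth_eq0 ->.
    by rewrite e_irr.
  left; split=> //; have [exp dxp] := parent_edge xr.
  by apply: (shallow_neighbor_unique exy exp) => //; rewrite -dxp.
have yr : y != r by apply: contraTneq dxy => ->; rewrite depth_root.
right; split=> //; have [eyp dyp] := parent_edge yr.
rewrite e_sym in exy; apply: (shallow_neighbor_unique exy eyp); first exact: ltnW.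
by rewrite -dyp.
Qed.

Definition children v := [set c | (c != r) && (parent c == v)].

Lemma deg_children v : deg e v = #|children v| + (v != r).
Proof.
have parent_child c : c \in children v -> e v c.
  by rewrite inE => /andP[cr /eqP <-]; rewrite e_sym; have [] := parent_edge cr.
have child_parent c : e v c -> c = parent v \/ c \in children v.
  by case/edge_parent=> [[-> _]|[-> cr]]; [left | right; rewrite inE cr eqxx].
rewrite /deg; have [vr|vr] := eqVneq v r; first subst v.
  rewrite addn0; apply: eq_card => c; rewrite [in LHS]inE.
  apply/idP/idP => [erc|/parent_child //]; case/child_parent: (erc) => // crp.
  by move: erc; rewrite crp parent_root e_irr.
have [evp dvp] := parent_edge vr.
rewrite (_ : [set c | e v c] = parent v |: children v); last first.
  apply/setP => c; rewrite in_setU1 [in LHS]inE; apply/idP/orP.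
    by case/child_parent=> [->|]; [left | right].
  by case=> [/eqP ->|/parent_child].
rewrite cardsU1 addnC; suff -> : parent v \in children v = false by [].
apply/negP; rewrite inE => /andP[_ /eqP ppv].
by move: dvp (congr1 depth ppv); rewrite !depth_parent; lia.
Qed.

Lemma sum_deg : \sum_v deg e v = (#|V|.-1).*2.
Proof.
have sum_children : \sum_v #|children v| = #|V|.-1.
  rewrite -(cardC1 r) -sum1_card [RHS](partition_big parent xpredT) //=.
  by apply: eq_bigr => v _; rewrite sum1_card; apply: eq_card => c; rewrite !inE.
rewrite (eq_bigr _ (fun v _ => deg_children v)) big_split /= sum_children -addnn.
congr (_ + _); rewrite -(cardC1 r) -sum1_card [RHS]big_mkcond.
by apply: eq_bigr => v _; rewrite inE; case: (v != r).
Qed.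

Lemma depth_iter i v : depth (iter i parent v) = depth v - i.
Proof. by elim: i => [|i IHi]; rewrite ?subn0 //= depth_parent IHi subnS. Qed.

Lemma iter_parent_depth i v : depth v <= i -> iter i parent v = r.
Proof. by move=> dvi; apply: depth_eq0; rewrite depth_iter; apply/eqP; rewrite subn_eq0. Qed.

Lemma exists_leaf v : v != r -> exists l, is_leaf e l.
Proof.
move=> vr; pose l := [arg max_(u > r) depth u].
have [dvl deepest] : depth v <= depth l /\ forall u, depth u <= depth l.
  by rewrite /l; case: arg_maxnP => // w _ max_w; split=> [|u]; apply: max_w.
have lr : l != r.
  apply: contraTneq dvl => ->; rewrite depth_root -ltnNge lt0n.
  by apply: contra vr => /eqP/depth_eq0 ->.
exists l; rewrite /is_leaf deg_children lr addn1 eqSS cards_eq0; apply/eqP/setP => c.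
rewrite !inE; apply/negbTE; apply/negP => /andP[cr /eqP cl].
by have := deepest c; have [_ <-] := parent_edge cr; rewrite cl ltnn.
Qed.

Definition ancestor t v :=
  (depth t <= depth v) && (iter (depth v - depth t) parent v == t).

Lemma iter_ancestor i v : i <= depth v -> ancestor (iter i parent v) v.
Proof. by move=> iv; rewrite /ancestor depth_iter leq_subr subKn // eqxx. Qed.

Lemma ancestor_iterE t v : ancestor t v -> iter (depth v - depth t) parent v = t.
Proof. by case/andP=> _ /eqP. Qed.

Lemma ancestor_depth t v : ancestor t v -> depth t <= depth v.
Proof. by case/andP. Qed.

Lemma ancestor_refl v : ancestor v v.
Proof. by rewrite /ancestor leqnn subnn eqxx. Qed.

Lemma ancestor_root v : ancestor r v.
Proof. by rewrite -(iter_parent_depth (leqnn (depth v))) iter_ancestor. Qed.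

Lemma ancestor_parent v : ancestor (parent v) v.
Proof.
have [->|vr] := eqVneq v r; first by rewrite parent_root ancestor_refl.
by apply: (iter_ancestor (i := 1)); have [_ <-] := parent_edge vr.
Qed.

Lemma ancestor_depth_inj a b v :
  ancestor a v -> ancestor b v -> depth a = depth b -> a = b.
Proof. by move=> av bv dab; rewrite -(ancestor_iterE av) -(ancestor_iterE bv) dab. Qed.

Lemma ancestor_trans a b c : ancestor a b -> ancestor b c -> ancestor a c.
Proof.
move=> ab bc; have dab := ancestor_depth ab; have dbc := ancestor_depth bc.
rewrite /ancestor (leq_trans dab dbc).
have -> : depth c - depth a = (depth b - depth a) + (depth c - depth b) by lia.
by rewrite iterD (ancestor_iterE bc) (ancestor_iterE ab) eqxx.
Qed.

Lemma ancestor_parentr t x : ancestor t x -> x != t -> ancestor t (parent x).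
Proof.
move=> tx xt; have dtx : depth t < depth x.
  rewrite ltn_neqAle ancestor_depth // andbT; apply: contra xt => /eqP dtx.
  by rewrite (ancestor_depth_inj tx (ancestor_refl x) dtx).
rewrite -(ancestor_iterE tx) (_ : depth x - depth t = (depth x - depth t).-1.+1); last by lia.
by rewrite iterSr iter_ancestor // depth_parent; lia.
Qed.

Section FirstAncestor.
Variable P : pred V.
Hypothesis P_root : P r.

Lemma first_index_ex v : exists i, P (iter i parent v).
Proof. by exists (depth v); rewrite iter_parent_depth. Qed.

Definition first_ancestor v := iter (ex_minn (first_index_ex v)) parent v.

Lemma first_ancestorP v : P (first_ancestor v).
Proof. by rewrite /first_ancestor; case: ex_minnP. Qed.

Lemma first_ancestor_ancestor v : ancestor (first_ancestor v) v.
Proof.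
rewrite /first_ancestor; case: ex_minnP => i _ min_i; apply: iter_ancestor.
by apply: min_i; rewrite iter_parent_depth.
Qed.

Lemma first_ancestor_deepest u v :
  ancestor u v -> P u -> depth u <= depth (first_ancestor v).
Proof.
move=> uv Pu; have duv := ancestor_depth uv.
rewrite /first_ancestor depth_iter; case: ex_minnP => i _ min_i.
by have := min_i (depth v - depth u); rewrite ancestor_iterE // => /(_ Pu); lia.
Qed.

Lemma first_ancestor_id v : P v -> first_ancestor v = v.
Proof.
move=> Pv; rewrite /first_ancestor; case: ex_minnP => i _ min_i.
by have := min_i 0 Pv; rewrite leqn0 => /eqP ->.
Qed.

Lemma first_ancestor_parent x : ~~ P x -> first_ancestor x = first_ancestor (parent x).
Proof.
move=> nPx; have fx_x := first_ancestor_ancestor x.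
have fpx_x := ancestor_trans (first_ancestor_ancestor (parent x)) (ancestor_parent x).
have fx_px : ancestor (first_ancestor x) (parent x).
  apply: ancestor_parentr => //; apply: contraNneq nPx => ->.
  exact: first_ancestorP.
apply: (ancestor_depth_inj fx_x fpx_x); apply/eqP; rewrite eqn_leq.
by rewrite !first_ancestor_deepest ?first_ancestorP.
Qed.

End FirstAncestor.

Section LeafRooted.
Hypothesis root_leaf : is_leaf e r.

Lemma deg_gt0 v : 0 < deg e v.
Proof.
have [->|vr] := eqVneq v r; first by rewrite (eqP root_leaf).
by rewrite deg_children vr addn1.
Qed.

Lemma deg2_neq_root v : deg e v = 2 -> v != r.
Proof. by move=> dv; apply/eqP => vr; move: dv; rewrite vr (eqP root_leaf). Qed.

Lemma parent_deg2_inj x y : parent x = parent y -> deg e (parent x) = 2 -> x = y.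
Proof.
move=> pxy d2; have pr := deg2_neq_root d2.
have xr : x != r by apply: contraNneq pr => ->; rewrite parent_root.
have yr : y != r by apply: contraNneq pr => yr; rewrite pxy yr parent_root.
move: d2; rewrite deg_children pr addn1 => /eqP; rewrite eqSS => /cards1P[c cE].
have : x \in children (parent x) by rewrite inE xr eqxx.
have : y \in children (parent x) by rewrite inE yr pxy eqxx.
by rewrite cE !inE => /eqP -> /eqP ->.
Qed.

Lemma child_exists v : v != r -> 1 < deg e v -> exists2 c, c != r & parent c = v.
Proof.
move=> vr; rewrite deg_children vr addn1 ltnS => /card_gt0P[c].
by rewrite inE => /andP[cr /eqP pc]; exists c.
Qed.

Lemma chain_len_ex c : exists i, deg e (iter i.+1 parent c) != 2.
Proof. by exists (depth c); rewrite iter_parent_depth // (eqP root_leaf). Qed.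

Definition chain_len c := ex_minn (chain_len_ex c).

Lemma chain_len_deg c i : 0 < i <= chain_len c -> deg e (iter i parent c) = 2.
Proof.
case: i => // i /=; rewrite /chain_len; case: ex_minnP => m _ min_m lt_im.
by apply/eqP/negPn/negP => /min_m; rewrite leqNgt lt_im.
Qed.

Lemma chain_len_child w c :
  deg e w = 2 -> c != r -> parent c = w -> chain_len w < chain_len c.
Proof.
move=> dw cr pc; rewrite [chain_len c]/chain_len; case: ex_minnP => m dm _.
rewrite ltnNge; apply: contra dm => mw; rewrite iterSr pc.
by case: m mw => [|m] mw; rewrite ?dw // chain_len_deg.
Qed.

Definition branch := [set x | (deg e x != 2) && (x != r)].

Lemma iter_parent_deg2_inj i x y :
  (forall j, j < i -> deg e (iter j.+1 parent x) = 2) ->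
  iter i parent x = iter i parent y -> x = y.
Proof.
elim: i x y => [//|i IHi] x y d2 /= eq_xy.
apply: IHi => [j lt_ji|]; first exact/d2/ltnW.
by apply: parent_deg2_inj => //; apply: d2.
Qed.

Lemma chain_inj c c' a b : c \in branch -> c' \in branch ->
  0 < a <= chain_len c -> 0 < b <= chain_len c' ->
  iter a parent c = iter b parent c' -> a = b /\ c = c'.
Proof.
wlog le_ab : c c' a b / a <= b.
  move=> W cB c'B ha hb eq_cc'; have [/W|/ltnW/W] := leqP a b; first exact.
  by move=> /(_ c' c) [] // -> ->.
move=> cB c'B /andP[a0 ac] /andP[b0 bc'] eq_cc'.
have c_on_c' : c = iter (b - a) parent c'.
  apply: (iter_parent_deg2_inj (i := a)) => [j lt_ja|]; first by apply: chain_len_deg; lia.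
  by rewrite -iterD subnKC.
have [lt_ab|] := ltnP a b.
  by move: cB; rewrite inE c_on_c' chain_len_deg ?eqxx //; lia.
move=> le_ba; have eq_ab : a = b by lia.
by split; rewrite // c_on_c' eq_ab subnn.
Qed.

Lemma deg2_on_chain v : deg e v = 2 ->
  exists c a, [/\ c \in branch, 0 < a <= chain_len c & iter a parent c = v].
Proof.
move=> dv; have vr := deg2_neq_root dv.
pose X := [set w | ancestor v w && (depth w - depth v <= chain_len w)].
have vX : v \in X by rewrite inE ancestor_refl subnn.
case: (arg_maxnP depth vX) => w wX deepest.
have /[!inE] /andP[vw dwv] : w \in X := wX.
have wr : w != r.
  apply: contraNneq vr => wr; apply/eqP/depth_eq0.
  by move: (ancestor_depth vw); rewrite wr depth_root; lia.
have dw : deg e w != 2.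
  apply/eqP => dw; have [c cr pc] := child_exists wr (eq_leq (esym dw)).
  have [_ dc] := parent_edge cr; rewrite pc in dc.
  have : c \in X.
    rewrite inE (ancestor_trans vw) -?pc ?ancestor_parent //=.
    by have := chain_len_child dw cr pc; lia.
  by move/deepest; lia.
have wv : w != v by apply: contraNneq dw => ->; rewrite dv.
exists w, (depth w - depth v); split; rewrite ?inE ?dw ?wr ?ancestor_iterE //.
rewrite dwv andbT subn_gt0 ltn_neqAle ancestor_depth // andbT.
by apply: contra wv => /eqP/esym/(ancestor_depth_inj (ancestor_refl w) vw)/eqP.
Qed.

Lemma card_deg2_le : #|[set x | deg e x == 2]| <= \sum_(c in branch) chain_len c.
Proof.
pose s := [seq iter a parent c | c <- enum branch, a <- iota 1 (chain_len c)].
have -> : \sum_(c in branch) chain_len c = size s.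
  rewrite size_allpairs_dep sumnE big_map -big_enum /=.
  by apply: eq_bigr => c _; rewrite size_iota.
apply: leq_trans (card_size s); apply: subset_leq_card; apply/subsetP => v.
rewrite inE => /eqP /deg2_on_chain [c [a [cB /andP[a0 ac] <-]]].
apply/allpairsPdep; exists c, a; split; rewrite ?mem_enum ?mem_iota //; lia.
Qed.

Lemma card_deg_neq2 : #|~: [set x | deg e x == 2]| + 2 <= 2 * #|leaves e|.
Proof.
have : \sum_(v : V) 3 <= \sum_v (deg e v + (deg e v == 1) + (deg e v == 1) + (deg e v == 2)).
  by apply: leq_sum => v _; have := deg_gt0 v; case: (deg e v) => [|[|[|d]]].
rewrite !big_split /= sum_deg sum_nat_const !sum_bool_card.
have V0 : 0 < #|V| by apply/card_gt0P; exists r.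
have -> : #|(xpredT : pred V)| = #|V| by apply: eq_card.
by have := cardsC [set x | deg e x == 2]; rewrite /leaves /is_leaf; lia.
Qed.

Lemma iter_parent_path x a m :
  (forall i, a <= i < a + m -> iter i parent x != r) ->
  path e (iter a parent x) [seq iter i parent x | i <- iota a.+1 m].
Proof.
elim: m a => [//|m IHm] a nr /=; apply/andP; split.
  by have [] := parent_edge (nr a _); rewrite ?leqnn ?addnS ?ltnS ?leq_addr.
by apply: IHm => i /andP[lt_ai lt_im]; apply: nr; rewrite ltnW //= addnS.
Qed.

Section BarePaths.
Variable k : nat.

Definition chain_segment c j := [seq iter a parent c | a <- iota (j * k.+1).+1 k.+1].

Lemma chain_segmentP c j x : x \in chain_segment c j ->
  exists2 a, j * k.+1 < a <= j.+1 * k.+1 & x = iter a parent c.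
Proof. by case/mapP=> a; rewrite mem_iota mulSnr addSn ltnS => ha ->; exists a. Qed.

Lemma chain_segment_on_chain c j a : j.+1 * k.+1 <= chain_len c ->
  j * k.+1 < a <= j.+1 * k.+1 -> 0 < a <= chain_len c.
Proof.
by move=> jc /andP[lt_ja le_aj]; rewrite (leq_ltn_trans _ lt_ja) ?(leq_trans le_aj).
Qed.

Lemma chain_segment_bare c j : c \in branch -> j.+1 * k.+1 <= chain_len c ->
  is_bare_path e (chain_segment c j) /\ size (chain_segment c j) = k.+1.
Proof.
move=> cB jc; have on_chain a := chain_segment_on_chain (a := a) jc.
have seg_deg2 x : x \in chain_segment c j -> deg e x = 2.
  by case/chain_segmentP=> a /on_chain ha ->; apply: chain_len_deg.
split; last by rewrite size_map size_iota.
split=> [|i _ lt_is x0]; last first.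
  by apply/seg_deg2/mem_nth; move: lt_is; rewrite size_map size_iota; lia.
have seg_uniq : uniq (chain_segment c j).
  rewrite map_inj_in_uniq ?iota_uniq // => a b ha hb eq_ab.
  move: ha hb; rewrite !mem_iota addSn -mulSnr !ltnS => /on_chain ha /on_chain hb.
  by have [] := chain_inj cB cB ha hb eq_ab.
rewrite /is_gpath; change (path e (iter (j * k.+1).+1 parent c)
  [seq iter a parent c | a <- iota (j * k.+1).+2 k] && uniq (chain_segment c j)).
rewrite seg_uniq andbT iter_parent_path // => i hi.
by apply/deg2_neq_root/chain_len_deg; rewrite on_chain //; move: hi; rewrite mulSnr; lia.
Qed.

Lemma chain_segment_disjoint c c' j j' : c \in branch -> c' \in branch ->
  j.+1 * k.+1 <= chain_len c -> j'.+1 * k.+1 <= chain_len c' -> (c, j) != (c', j') ->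
  [disjoint chain_segment c j & chain_segment c' j'].
Proof.
move=> cB c'B jc j'c' neq; apply/pred0P => x /=; apply/negP => /andP[].
case/chain_segmentP=> a ha -> /chain_segmentP[b hb eq_ab].
have [eq_ab' eq_cc'] := chain_inj cB c'B (chain_segment_on_chain jc ha)
  (chain_segment_on_chain j'c' hb) eq_ab; subst b c'.
move/negP: neq; apply; rewrite xpair_eqE eqxx /=; apply/eqP.
move: ha hb; case: (ltngtP j j') => // [lt_jj|lt_j'j] ha hb.
  have : j.+1 * k.+1 <= j' * k.+1 by rewrite leq_mul2r lt_jj orbT.
  by rewrite mulSnr in ha hb *; lia.
have : j'.+1 * k.+1 <= j * k.+1 by rewrite leq_mul2r lt_j'j orbT.
by rewrite mulSnr in ha hb *; lia.
Qed.

Definition segment_ids :=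
  [seq (c, j) | c <- enum branch, j <- iota 0 (chain_len c %/ k.+1)].

Definition bare_paths := [seq chain_segment x.1 x.2 | x <- segment_ids].

Lemma segment_idsP x : x \in segment_ids ->
  x.1 \in branch /\ x.2.+1 * k.+1 <= chain_len x.1.
Proof.
case/allpairsPdep=> c [j [cB hj ->]]; rewrite mem_enum in cB.
by move: hj; rewrite mem_iota add0n leq_divRL.
Qed.

Lemma size_bare_paths : size bare_paths = \sum_(c in branch) chain_len c %/ k.+1.
Proof.
rewrite size_map size_allpairs_dep sumnE big_map -big_enum /=.
by apply: eq_bigr => c _; rewrite size_iota.
Qed.

Lemma bare_pathsP : disjoint_bare_paths e k bare_paths.
Proof.
split=> [s /mapP[x /segment_idsP[xB hx] ->]|]; first exact: chain_segment_bare.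
rewrite size_map; apply: nth_map_disjoint => [|x y /segment_idsP[xB hx] /segment_idsP[yB hy]].
  apply: allpairs_uniq_dep => [|c _|]; rewrite ?enum_uniq ?iota_uniq //.
  by move=> [c j] [c' j'] _ _ /= [-> ->].
by case: x y xB yB hx hy => [c j] [c' j'] /=; apply: chain_segment_disjoint.
Qed.

End BarePaths.

Definition climb t v :=
  if ancestor t v then 0
  else if ancestor v t then minn (depth t - depth v) (chain_len t).+1
  else (chain_len t).+1.

(* The only way up from the subtree of [t] runs along the degree-2 chain
   above [t], since a degree-2 vertex has a single child. *)
Lemma climb_parent t x : x != r ->
  climb t (parent x) <= (climb t x).+1 /\ climb t x <= (climb t (parent x)).+1.
Proof.
move=> xr; have px_x := ancestor_parent x; have [_ dpx] := parent_edge xr.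
rewrite /climb; have [tx|ntx] := boolP (ancestor t x).
  have [xt|xt] := eqVneq x t; last by rewrite ancestor_parentr.
  rewrite -xt -dpx subSnn px_x (_ : ancestor x (parent x) = false) ?geq_minl //.
  by apply/negP => /ancestor_depth; lia.
have -> : ancestor t (parent x) = false.
  by apply: contraNF ntx => /ancestor_trans; apply.
have [xt|nxt] := boolP (ancestor x t).
  by rewrite (ancestor_trans px_x xt); have := ancestor_depth xt; lia.
case: ifP => // pxt; split; first exact: leq_trans (geq_minr _ _) _.
rewrite ltnS leq_min leqnSn andbT.
set j := depth t - depth (parent x).
have dpxt := ancestor_depth pxt.
have j0 : 0 < j.
  rewrite subn_gt0 ltn_neqAle dpxt andbT; apply: contra ntx => /eqP eq_d.
  by rewrite -(ancestor_depth_inj pxt (ancestor_refl t) eq_d).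
rewrite leqNgt; apply: contra nxt => lt_jc.
have pxE : iter j parent t = parent x by rewrite ancestor_iterE.
have <- : iter j.-1 parent t = x.
  apply: parent_deg2_inj; rewrite -iterS prednK // pxE //.
  by rewrite -pxE chain_len_deg // j0 ltnW.
by apply: iter_ancestor; rewrite /j; lia.
Qed.

Lemma climb_edge t x y : e x y -> climb t y <= (climb t x).+1.
Proof.
case/edge_parent=> [[-> xr]|[-> yr]]; first by have [] := climb_parent t xr.
by have [] := climb_parent t yr.
Qed.

Lemma climb_leaf t l : ~~ ancestor t l -> is_leaf e l -> climb t l = (chain_len t).+1.
Proof.
move=> ntl ll; rewrite /climb (negbTE ntl); case: ifP => // lt; apply/minn_idPr.
set j := depth t - depth l; have dlt := ancestor_depth lt.
have j0 : 0 < j.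
  rewrite subn_gt0 ltn_neqAle dlt andbT; apply: contra ntl => /eqP eq_d.
  by rewrite (ancestor_depth_inj lt (ancestor_refl t) eq_d) ancestor_refl.
rewrite ltnNge; apply/negP => le_jc.
by move: ll; rewrite /is_leaf -(ancestor_iterE lt) chain_len_deg ?j0.
Qed.

Lemma far_from_subtree t u l : ancestor t u -> ~~ ancestor t l -> is_leaf e l ->
  dist_ge e u l (chain_len t).+1.
Proof.
move=> tu ntl ll p up lp; have := walk_lipschitz (climb_edge t) up.
by rewrite lp climb_leaf // /climb tu add0n.
Qed.

Section Tops.
Variable th : nat.

Definition long_branch := [set c in branch | th <= chain_len c].

Definition is_top x := (x == r) || (x \in long_branch).

Lemma is_top_root : is_top r.
Proof. by rewrite /is_top eqxx. Qed.

Definition top_of := first_ancestor is_top_root.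

Lemma top_of_ancestor v : ancestor (top_of v) v.
Proof. exact: first_ancestor_ancestor. Qed.

Lemma is_top_of v : is_top (top_of v).
Proof. exact: first_ancestorP. Qed.

Lemma is_top_chain_len t u : is_top t -> ~~ ancestor t u -> th <= chain_len t.
Proof.
by case/orP=> [/eqP ->|]; [rewrite ancestor_root | rewrite inE => /andP[_ ->]].
Qed.

Lemma top_of_far l l' : is_leaf e l -> is_leaf e l' -> top_of l != top_of l' ->
  dist_ge e l l' th.+1.
Proof.
have far t u l1 : is_top t -> ancestor t u -> ~~ ancestor t l1 -> is_leaf e l1 ->
    dist_ge e u l1 th.+1.
  move=> Tt tu ntl l1_leaf p up lp; apply: leq_trans (far_from_subtree tu ntl l1_leaf up lp).
  by rewrite ltnS (is_top_chain_len Tt ntl).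
move=> ll ll' tt'; have [tl'|] := boolP (ancestor (top_of l) l'); last first.
  by move=> ntl'; apply: (far _ _ _ (is_top_of l) (top_of_ancestor l)).
have [t'l|nt'l] := boolP (ancestor (top_of l') l); last first.
  by apply: dist_ge_sym => //; apply: (far _ _ _ (is_top_of l') (top_of_ancestor l')).
case/eqP: tt'; apply: (ancestor_depth_inj (top_of_ancestor l) t'l); apply/eqP.
by rewrite eqn_leq !first_ancestor_deepest ?is_top_of.
Qed.

Definition leafy_tops := top_of @: leaves e.

Definition leaf_rep t := odflt r [pick l in leaves e | top_of l == t].

Definition separated_leaves := leaf_rep @: leafy_tops.

Lemma leaf_repP t : t \in leafy_tops -> leaf_rep t \in leaves e /\ top_of (leaf_rep t) = t.
Proof.
case/imsetP=> l ll ->; rewrite /leaf_rep; case: pickP => [l' /andP[-> /eqP] //|].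
by move/(_ l); rewrite ll eqxx.
Qed.

Lemma card_separated_leaves : #|separated_leaves| = #|leafy_tops|.
Proof.
apply: card_in_imset => t t' /leaf_repP[_ tE] /leaf_repP[_ t'E] eq_rep.
by rewrite -tE -t'E eq_rep.
Qed.

Lemma separated_leaves_sub : separated_leaves \subset leaves e.
Proof. by apply/subsetP => _ /imsetP[t /leaf_repP[]] ? _ ->. Qed.

Lemma separated_leavesP : separated e th.+1 separated_leaves.
Proof.
move=> _ _ /imsetP[t /leaf_repP[lt tE] ->] /imsetP[t' /leaf_repP[lt' t'E] ->] neq.
move: lt lt'; rewrite !inE => lt lt'; apply: (top_of_far lt lt').
by rewrite tE t'E; apply: contraNneq neq => ->.
Qed.

Lemma long_below ch : ch != r -> top_of (parent ch) \notin leafy_tops ->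
  exists2 c, c \in long_branch & top_of (parent c) = top_of (parent ch) /\ ancestor ch c.
Proof.
move=> chr nleafy; set t := top_of (parent ch) in nleafy *.
pose X := [set v | ancestor ch v && (top_of (parent v) == t)].
have chX : ch \in X by rewrite inE ancestor_refl eqxx.
case: (arg_maxnP depth chX) => w wX deepest.
have /[!inE] /andP[chw /eqP tw] : w \in X := wX.
have wr : w != r.
  apply: contraNneq chr => wr; apply/eqP/depth_eq0.
  by move: (ancestor_depth chw); rewrite wr depth_root; lia.
have [Tw|nTw] := boolP (is_top w).
  by exists w; [move: Tw; rewrite /is_top (negbTE wr) | split].
have top_w : top_of w = t by rewrite /top_of (first_ancestor_parent _ nTw).
have dw : 1 < deg e w.
  rewrite ltn_neqAle eq_sym deg_gt0 andbT; apply: contra nleafy => lw.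
  by apply/imsetP; exists w; rewrite ?inE // top_w.
have [c cr pc] := child_exists wr dw; have [_ dc] := parent_edge cr.
have : c \in X by rewrite inE pc top_w eqxx (ancestor_trans chw) // -pc ancestor_parent.
by move/deepest; rewrite -dc pc; lia.
Qed.

Lemma root_leafy : r \in leafy_tops.
Proof.
apply/imsetP; exists r; first by rewrite inE.
by rewrite /top_of first_ancestor_id // is_top_root.
Qed.

Lemma two_long_below t : is_top t -> t \notin leafy_tops ->
  1 < #|[set c in long_branch | top_of (parent c) == t]|.
Proof.
move=> Tt nleafy; have tr : t != r by apply: contraNneq nleafy => ->; apply: root_leafy.
have top_t : top_of t = t := first_ancestor_id _ Tt.
have deg_t : 2 < deg e t.
  have := deg_gt0 t; move: Tt; rewrite /is_top (negbTE tr) !inE => /andP[/andP[d2 _] _].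
  have : deg e t != 1 by apply: contra nleafy => lt; apply/imsetP; exists t; rewrite ?inE.
  by move: d2; case: (deg e t) => [|[|[|]]].
move: deg_t; rewrite deg_children tr addn1 ltnS => /card_gt1P[c1 [c2 []]].
rewrite !inE => /andP[c1r /eqP p1] /andP[c2r /eqP p2] c12.
have below ch : ch != r -> parent ch = t ->
    exists2 d, d \in long_branch & top_of (parent d) = t /\ ancestor ch d.
  by move=> chr pch; have := long_below chr; rewrite pch top_t => /(_ nleafy).
have [d1 long1 [t1 a1]] := below c1 c1r p1; have [d2 long2 [t2 a2]] := below c2 c2r p2.
apply/card_gt1P; exists d1, d2; rewrite [d1 \in _]inE [d2 \in _]inE long1 long2 t1 t2 eqxx.
split=> //; apply: contraNneq c12 => eq_d; subst d2; apply/eqP.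
apply: (ancestor_depth_inj a1 a2).
by have [_ <-] := parent_edge c1r; have [_ <-] := parent_edge c2r; rewrite p1 p2.
Qed.

Lemma card_long_branch : #|long_branch| + 2 <= 2 * #|leafy_tops|.
Proof.
pose tops := [set x | is_top x].
pose below t := #|[set c in long_branch | top_of (parent c) == t]|.
have sum_below : #|long_branch| = \sum_(t in tops) below t.
  rewrite -sum1_card (partition_big (top_of \o parent) (fun t => t \in tops)); last first.
    by move=> c _; rewrite inE is_top_of.
  apply: eq_bigr => t _; rewrite sum1_card /below; apply: eq_card => c.
  by rewrite unfold_in !inE.
have leafy_tops_sub : leafy_tops \subset tops.
  by apply/subsetP => _ /imsetP[l _ ->]; rewrite inE is_top_of.
have : 2 * #|tops :\: leafy_tops| <= #|long_branch|.
  rewrite sum_below (big_setID leafy_tops) /= -[X in X <= _]add0n leq_add //.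
  rewrite mulnC -sum_nat_const; apply: leq_sum => t; rewrite in_setD inE => /andP[].
  by move=> nleafy Tt; apply: two_long_below.
have card_tops : #|tops| = #|long_branch| + 1.
  have -> : tops = r |: long_branch by apply/setP => x; rewrite !inE /is_top !inE.
  by rewrite cardsU1 !inE eqxx andbF addnC.
have := subset_leq_card leafy_tops_sub.
by rewrite cardsD (setIidPr leafy_tops_sub) card_tops; lia.
Qed.

End Tops.

Lemma leq_chain_pieces th k m :
  m <= th.-1 + k * (th <= m) + 2 * k.+1 * (m %/ k.+1).
Proof.
have [le_mk|lt_km] := leqP m k.
  by move: (m %/ k.+1) => q; case: (leqP th m) => /=; nia.
have q0 : 0 < m %/ k.+1 by rewrite divn_gt0.
by have := divn_eq m k.+1; have := ltn_pmod m (ltn0Sn k); nia.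
Qed.

Lemma exists_separated_leaves_bare_paths th k : 0 < th ->
  exists (Q : {set V}) (P : seq (seq V)),
    [/\ Q \subset leaves e, separated e th.+1 Q, disjoint_bare_paths e k P
    & #|V| <= 2 * th * #|leaves e| + 2 * k * #|Q| + 2 * k.+1 * size P].
Proof.
move=> th0; exists (separated_leaves th), (bare_paths k).
split; [exact: separated_leaves_sub | exact: separated_leavesP | exact: bare_pathsP |].
have chains : \sum_(c in branch) chain_len c <=
    #|branch| * th.-1 + k * #|long_branch th| + 2 * k.+1 * size (bare_paths k).
  apply: (@leq_trans (\sum_(c in branch)
      (th.-1 + k * (th <= chain_len c) + 2 * k.+1 * (chain_len c %/ k.+1)))).
    by apply: leq_sum => c _; apply: leq_chain_pieces.
  rewrite !big_split sum_nat_const -!big_distrr size_bare_paths -big_mkcondr sum1_card.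
  apply: eq_leq; do 2!congr (_ + _); apply: (congr1 (muln k)).
  by apply: eq_card => c; rewrite unfold_in !inE.
have branch_sub : branch \subset ~: [set x | deg e x == 2].
  by apply/subsetP => x; rewrite !inE => /andP[].
have := card_deg2_le; have := cardsC [set x | deg e x == 2].
have := card_long_branch th; rewrite -card_separated_leaves.
have := card_deg_neq2; have := subset_leq_card branch_sub.
nia.
Qed.

End LeafRooted.
End RootedTree.

Theorem lemma3p16 (n k d : nat) (V : finType) (e : rel V) :
  0 < d ->
  60 * k <= n -> 4 * d <= k ->
  is_tree e -> #|V| = n ->
  #|leaves e| * (5 * d) <= n ->
  (exists Q : {set V}, Q \subset leaves e /\ separated e (2 * d) Q /\
       n <= #|Q| * (40 * k))
  \/
  (exists P : seq (seq V), disjoint_bare_paths e k P /\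
       n <= size P * (40 * k)).
Proof.
move=> d0 hn hk [[e_sym e_irr] [e_conn e_acyc]] card_V card_leaves.
have [x [y [_ _ xy]]] : exists x y, [/\ x \in V, y \in V & x != y].
  by apply/card_gt1P; rewrite card_V; lia.
have [r r_leaf] := exists_leaf e_sym e_irr e_conn e_acyc xy.
have th0 : 0 < (2 * d).-1 by lia.
have [Q [P [QL Qsep Pok bound]]] :=
  exists_separated_leaves_bare_paths e_sym e_irr e_conn e_acyc r_leaf k th0.
rewrite prednK in Qsep; last by lia.
have [Qbig|Qsmall] := leqP n (#|Q| * (40 * k)); first by left; exists Q.
have [Pbig|Psmall] := leqP n (size P * (40 * k)); first by right; exists P.
have : 4 * size P <= k * size P by apply: leq_mul; lia.
by move: bound; rewrite card_V; nia.
Qed.
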